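(* Let $N>0$, $R=\mathbb{Q}[x_1,x_2,y_1,y_2]$, $w_2=(y_2^{N+1}-x_2^{N+1})/(y_2-x_2)$, and let $u_1,u_2\in R$ be homogeneous with $y_1^{N+1}+y_2^{N+1}-x_1^{N+1}-x_2^{N+1}=u_1(y_1+y_2-x_1-x_2)+u_2(y_1y_2-x_1x_2)$ and $u_i(y_1,y_2,x_1,x_2)=u_i(x_1,x_2,y_1,y_2)$. Let $\gamma=\frac{\partial u_1}{\partial y_1}-\frac{\partial u_1}{\partial y_2}-\frac12\frac{\partial u_2}{\partial y_2}(x_2+y_2)+\frac12\frac{\partial u_2}{\partial y_1}(x_1+y_1)$ and let $\Omega_2(\gamma)$ be the unique polynomial solution $z$ of $2z+\frac{\partial z}{\partial y_1}(y_1-x_1)+\frac{\partial z}{\partial y_2}(y_2-x_2)=\gamma$. Then $u_1+y_1u_2-w_2$ is divisible by $x_1-y_1$ in $R$, and $\Omega_2(\gamma)=-a_2$, where $a_2=\frac12u_2+\frac{u_1+y_1u_2-w_2}{x_1-y_1}$. *)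

From HB Require Import structures.
From mathcomp Require Import all_boot all_order all_algebra.
From mathcomp Require Import mpoly.
Set Implicit Arguments. Unset Strict Implicit. Unset Printing Implicit Defensive.
Import Order.TTheory GRing.Theory Num.Theory.
Local Open Scope ring_scope.

Notation R := {mpoly rat[4]}.

Definition ix1 : 'I_4 := @Ordinal 4 0 isT.
Definition ix2 : 'I_4 := @Ordinal 4 1 isT.
Definition iy1 : 'I_4 := @Ordinal 4 2 isT.
Definition iy2 : 'I_4 := @Ordinal 4 3 isT.

Definition x1 : R := 'X_ix1.
Definition x2 : R := 'X_ix2.
Definition y1 : R := 'X_iy1.
Definition y2 : R := 'X_iy2.

(* w2 = (y2^(N+1) - x2^(N+1)) / (y2 - x2) = sum_{i=0}^N y2^i x2^(N-i) *)
Definition w2 (N : nat) : R := \sum_(i < N.+1) y2 ^+ i * x2 ^+ (N - i).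

Definition swap_xy (p : R) : R := p \mPo [tuple y1; y2; x1; x2].

Definition OmegaOp (z : R) : R :=
  2%:R * z + (mderiv iy1 z) * (y1 - x1) + (mderiv iy2 z) * (y2 - x2).

Definition halfp (p : R) : R := (2%:R : rat)^-1 *: p.

Definition gammaA5 (u1 u2 : R) : R :=
  mderiv iy1 u1 - mderiv iy2 u1
  - halfp (mderiv iy2 u2 * (x2 + y2)) + halfp (mderiv iy1 u2 * (x1 + y1)).

Definition homogeneous (p : R) : Prop := exists d : nat, p \in @ishomog1 4 rat d mdeg.

From HB Require Import structures.
From mathcomp Require Import all_boot all_order all_algebra.
From mathcomp Require Import mpoly ring zify.
Import Order.TTheory GRing.Theory Num.Theory.
Local Open Scope ring_scope.

(* Substituting x1 for y1 in the defining identity of u1, u2 leaves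
   (y2 - x2) (u1 + x1 u2) = y2^(N+1) - x2^(N+1) at y1 = x1, so u1 + y1 u2 - w2
   vanishes at y1 = x1 and is divisible by x1 - y1; call the quotient q.
   Differentiating u1 + y1 u2 - w2 = (x1 - y1) q and the defining identity in
   y1 and y2 shows that -(u2/2 + q) solves the equation defining Omega_2.
   The solution is unique: at a monomial of maximal degree in (y1, y2) of the
   support of z, the coefficient of 2z + dz/dy1 (y1 - x1) + dz/dy2 (y2 - x2)
   is (2 + that degree) times the coefficient of z. *)

Section MPolyVariables.
Variables (n : nat) (A : comNzRingType).
Implicit Types (p : {mpoly A[n]}) (i j k : 'I_n) (m : 'X_{1..n}).

Lemma mderivXU i j : mderiv i ('X_j : {mpoly A[n]}) = (i == j)%:R.
Proof.
rewrite mderivX mnm1E eq_sym; case: eqP => [->|_]; last by rewrite scale0r.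
by rewrite -{1}[U_(j)%MM]add0m addmK mpolyX0 scale1r.
Qed.

Lemma mderiv_exp i p (k : nat) : mderiv i (p ^+ k) = p ^+ k.-1 *+ k * mderiv i p.
Proof.
elim: k => [|k IH]; first by rewrite expr0 mulr0n mul0r -mpolyC1 mderivC.
rewrite exprS mderivM IH; case: k {IH} => [|k] /=.
  by rewrite !expr0 mulr1 mul0r mulr0 addr0 mul1r.
by rewrite mulrSr exprS; ring.
Qed.

Lemma mcoeff_mderivMX i k p m : (mderiv i p * 'X_k)@_m =
  if (U_(k) <= m)%MM then p@_(m - U_(k) + U_(i)) *+ ((m - U_(k))%MM i).+1 else 0.
Proof.
case: ifP => [km | kNm].
  by rewrite -{1}(submK km) addmC mcoeffMX mcoeff_deriv.
apply/memN_msupp_eq0; rewrite (perm_mem (msuppMX _ _)).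
by apply/mapP => -[m' _ Em]; rewrite Em lem_addr in kNm.
Qed.

Lemma mcoeff_mderivMX_id i p m : (mderiv i p * 'X_i)@_m = p@_m *+ m i.
Proof.
rewrite mcoeff_mderivMX lep1mP; case: eqP => [-> | /eqP mi]; first by rewrite mulr0n.
by rewrite submK ?lep1mP // mnmBE mnm1E eqxx subn1 prednK // lt0n.
Qed.

Lemma mpolyX_subr_neq0 i j : i != j -> 'X_i - 'X_j != 0 :> {mpoly A[n]}.
Proof.
move=> ij; apply/eqP => /(congr1 (meval (fun k => (k == i)%:R))).
by rewrite mevalB !mevalXU meval0 eqxx eq_sym (negbTE ij) subr0 => /eqP; rewrite oner_eq0.
Qed.

End MPolyVariables.

Arguments mpolyX_subr_neq0 {n A i j}.

Section VariableSubstitution.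
Variables (n : nat) (A : comNzRingType) (i j : 'I_n).
Implicit Types (p q : {mpoly A[n]}).

Definition mvar_subst : n.-tuple {mpoly A[n]} :=
  [tuple 'X_(if k == i then j else k) | k < n].

Lemma mvar_substX (k : 'I_n) : 'X_k \mPo mvar_subst = 'X_(if k == i then j else k).
Proof. by rewrite comp_mpolyXU -tnth_nth tnth_mktuple. Qed.

Let divides_subst_diff p := exists r, p - (p \mPo mvar_subst) = ('X_i - 'X_j) * r.

Let divides_subst_diffM p q :
  divides_subst_diff p -> divides_subst_diff q -> divides_subst_diff (p * q).
Proof.
move=> [r Hr] [s Hs]; exists (r * q + (p \mPo mvar_subst) * s).
by rewrite rmorphM /= mulrDr mulrA -Hr mulrCA -Hs; ring.
Qed.

Lemma mvar_subst_dvd p : exists r, p - (p \mPo mvar_subst) = ('X_i - 'X_j) * r.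
Proof.
have one : divides_subst_diff 1 by exists 0; rewrite rmorph1 subrr mulr0.
have var k : divides_subst_diff 'X_k.
  rewrite /divides_subst_diff mvar_substX; case: eqP => [->|_]; first by exists 1; rewrite mulr1.
  by exists 0; rewrite subrr mulr0.
elim/mpolyind: p => [|c m p _ _ [r Hr]]; first by exists 0; rewrite raddf0 subrr mulr0.
have [s Hs] : divides_subst_diff 'X_[m].
  rewrite mpolyXE_id; elim/big_rec: _ => [//|k x _ Hx].
  apply: divides_subst_diffM => //; elim: (m k) => [|e IH]; first by rewrite expr0.
  by rewrite exprS; apply: divides_subst_diffM.
exists (c *: s + r).
by rewrite raddfD /= linearZ /= mulrDr -Hr -scalerAr -Hs scalerBr; ring.
Qed.

End VariableSubstitution.

Arguments mvar_subst {n A} i j.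
Arguments mvar_subst_dvd {n A} i j p.

Local Notation subst_y1_x1 p := (p \mPo mvar_subst iy1 ix1).

Lemma y1_sub_x1_neq0 : y1 - x1 != 0. Proof. by apply: mpolyX_subr_neq0. Qed.
Lemma y2_sub_x2_neq0 : y2 - x2 != 0. Proof. by apply: mpolyX_subr_neq0. Qed.

Lemma w2E N : (y2 - x2) * w2 N = y2 ^+ N.+1 - x2 ^+ N.+1.
Proof.
rewrite -opprB -[RHS]opprB subrXX mulNr; congr (- (_ * _)).
by apply: eq_bigr => i _; rewrite mulrC.
Qed.

Lemma w2_subst_y1_x1 N : subst_y1_x1 (w2 N) = w2 N.
Proof.
rewrite rmorph_sum; apply: eq_bigr => i _.
by rewrite rmorphM !rmorphXn /= !mvar_substX.
Qed.

Lemma mderiv_y1_w2 N : mderiv iy1 (w2 N) = 0.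
Proof.
have := congr1 (mderiv iy1) (w2E N).
rewrite !(mderivB, mderivM, mderiv_exp) !mderivXU /= => E.
have : (y2 - x2) * mderiv iy1 (w2 N) = 0.
  transitivity ((0 - 0) * w2 N + (y2 - x2) * mderiv iy1 (w2 N)); first ring.
  by rewrite E; ring.
by move/eqP; rewrite mulf_eq0 (negbTE y2_sub_x2_neq0) => /eqP.
Qed.

Lemma mderiv_y2_w2 N : w2 N + (y2 - x2) * mderiv iy2 (w2 N) = N.+1%:R * y2 ^+ N.
Proof.
have := congr1 (mderiv iy2) (w2E N).
rewrite !(mderivB, mderivM, mderiv_exp) !mderivXU /= => E.
transitivity ((1 - 0) * w2 N + (y2 - x2) * mderiv iy2 (w2 N)); first ring.
by rewrite E; ring.
Qed.

Lemma x1_sub_y1_dvd {N : nat} {u1 u2 : R} :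
  y1 ^+ N.+1 + y2 ^+ N.+1 - x1 ^+ N.+1 - x2 ^+ N.+1
    = u1 * (y1 + y2 - x1 - x2) + u2 * (y1 * y2 - x1 * x2) ->
  exists q, u1 + y1 * u2 - w2 N = (x1 - y1) * q.
Proof.
move=> Hu.
have subst0 : subst_y1_x1 (u1 + y1 * u2 - w2 N) = 0.
  move/(congr1 (comp_mpoly (mvar_subst iy1 ix1))): Hu.
  rewrite !(rmorphB, rmorphD, rmorphM, rmorphXn) /= !mvar_substX /= w2_subst_y1_x1.
  move: (subst_y1_x1 u1) (subst_y1_x1 u2) => v1 v2 Hv.
  suff : (y2 - x2) * (v1 + x1 * v2 - w2 N) = 0.
    by move/eqP; rewrite mulf_eq0 (negbTE y2_sub_x2_neq0) => /eqP.
  rewrite mulrBr w2E.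
  have -> : y2 ^+ N.+1 - x2 ^+ N.+1
      = x1 ^+ N.+1 + y2 ^+ N.+1 - x1 ^+ N.+1 - x2 ^+ N.+1 by ring.
  by rewrite Hv /x1 /x2 /y2; ring.
have [r Hr] := mvar_subst_dvd iy1 ix1 (u1 + y1 * u2 - w2 N).
rewrite subst0 subr0 in Hr.
by exists (- r); rewrite Hr mulrN -mulNr opprB.
Qed.

Definition ydeg (m : 'X_{1..4}) := (m iy1 + m iy2)%N.

Lemma mcoeff_OmegaOp_top {z : R} {m : 'X_{1..4}} :
  (forall m', (ydeg m < ydeg m')%N -> z@_m' = 0) ->
  (OmegaOp z)@_m = z@_m *+ (ydeg m).+2.
Proof.
move=> ztop.
have lower i k : i \in [:: iy1; iy2] -> k \in [:: ix1; ix2] ->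
    (mderiv i z * 'X_k)@_m = 0.
  rewrite mcoeff_mderivMX; case: ifP => // km yi xk; rewrite ztop ?mul0rn //.
  move: km; rewrite lep1mP /ydeg !mnmDE !mnmBE !mnm1E.
  by move: yi xk; rewrite !inE => /pred2P[]-> /pred2P[]-> /=; lia.
rewrite /OmegaOp !mulrBr !mcoeffD !mcoeffN mulr_natl mcoeffMn !mcoeff_mderivMX_id.
rewrite !lower ?inE ?eqxx ?orbT // !subr0 -!mulrnDr.
by congr (_ *+ _); rewrite /ydeg; lia.
Qed.

Lemma OmegaOpB (z1 z2 : R) : OmegaOp (z1 - z2) = OmegaOp z1 - OmegaOp z2.
Proof. by rewrite /OmegaOp !mderivB; ring. Qed.

Lemma OmegaOp_eq0 (z : R) : OmegaOp z = 0 -> z = 0.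
Proof.
move=> Hz; apply/eqP; apply: contraT => nz.
have [m0 m0z] : exists m, m \in msupp z.
  case E: (msupp z) => [|m s]; last by exists m; rewrite mem_head.
  by move: nz; rewrite -msupp_eq0 E.
pose has_ydeg d := has (fun m => ydeg m == d) (msupp z).
have has_m0 : exists d, has_ydeg d by exists (ydeg m0); apply/hasP; exists m0.
have ub d : has_ydeg d -> (d <= \max_(m <- msupp z) ydeg m)%N.
  by case/hasP => m mz /eqP <-; apply: leq_bigmax_seq.
case: (ex_maxnP has_m0 ub) => d /hasP[m mz /eqP dm] dmax.
have ztop m' : (ydeg m < ydeg m')%N -> z@_m' = 0.
  move=> lt; apply/eqP; rewrite mcoeff_eq0; apply: contraTN lt => m'z.
  by rewrite -leqNgt dm dmax //; apply/hasP; exists m'.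
move: (mcoeff_OmegaOp_top ztop); rewrite Hz mcoeff0 => /esym/eqP.
by rewrite mulrn_eq0 /= mcoeff_eq0 mz.
Qed.

Lemma OmegaOp_inj : injective OmegaOp.
Proof.
move=> z1 z2 E; apply/eqP; rewrite -subr_eq0; apply/eqP.
by apply: OmegaOp_eq0; rewrite OmegaOpB E subrr.
Qed.

Lemma OmegaOp_solution {N : nat} {u1 u2 q : R} :
  y1 ^+ N.+1 + y2 ^+ N.+1 - x1 ^+ N.+1 - x2 ^+ N.+1
    = u1 * (y1 + y2 - x1 - x2) + u2 * (y1 * y2 - x1 * x2) ->
  u1 + y1 * u2 - w2 N = (x1 - y1) * q ->
  OmegaOp (- (halfp u2 + q)) = gammaA5 u1 u2.
Proof.
move=> Hu Hq.
have := congr1 (mderiv iy1) Hq; have := congr1 (mderiv iy2) Hq.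
have := congr1 (mderiv iy2) Hu.
rewrite !(mderivB, mderivD, mderivN, mderivM, mderiv_exp) !mderivXU /= mderiv_y1_w2.
move/eqP; rewrite -subr_eq0; set e3 := (_ - _) => /eqP E3.
move/eqP; rewrite -subr_eq0; set e2 := (_ - _) => /eqP E2.
move/eqP; rewrite -subr_eq0; set e1 := (_ - _) => /eqP E1.
move/eqP: (mderiv_y2_w2 N); rewrite -subr_eq0; set e4 := (_ - _) => /eqP E4.
move/eqP: Hq; rewrite -subr_eq0; set eP := (_ - _) => /eqP EP.
have : 2%:R * (2%:R^-1 : rat)%:MP - 1 = 0 :> R.
  by rewrite -(rmorph_nat (@mpolyC 4 rat)) -rmorphM /= mulfV // subrr.
rewrite /OmegaOp /gammaA5 /halfp -!mul_mpolyC !(mderivN, mderivD, mderiv_mulC).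
move: (2%:R^-1 : rat)%:MP => h; set eh := (_ - _) => Eh.
(* After clearing the factor y1 - x1, the two sides differ by a combination
   of the identities e1, ..., e4, eP and eh, each of which vanishes. *)
apply: (mulfI y1_sub_x1_neq0).
transitivity ((y1 - x1) * (mderiv iy1 u1 - mderiv iy2 u1
      - h * (mderiv iy2 u2 * (x2 + y2)) + h * (mderiv iy1 u2 * (x1 + y1)))
  - (y1 - x1) * e1 - (y2 - x2) * e2 - eP - (y1 - x1) * u2 * eh
  - (y1 - x1) * y1 * mderiv iy1 u2 * eh + (y1 - x1) * x2 * mderiv iy2 u2 * eh
  - e3 - e4).
  by rewrite /e1 /e2 /e3 /e4 /eP /eh; ring.
by rewrite E1 E2 E3 E4 EP Eh; ring.
Qed.

Theorem lemmaA5 (N : nat) (u1 u2 : R) :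
  (0 < N)%N ->
  homogeneous u1 ->
  homogeneous u2 ->
  y1 ^+ N.+1 + y2 ^+ N.+1 - x1 ^+ N.+1 - x2 ^+ N.+1
    = u1 * (y1 + y2 - x1 - x2) + u2 * (y1 * y2 - x1 * x2) ->
  swap_xy u1 = u1 ->
  swap_xy u2 = u2 ->
  exists q : R,
    u1 + y1 * u2 - w2 N = (x1 - y1) * q /\
    (forall z : R, OmegaOp z = gammaA5 u1 u2 <-> z = - (halfp u2 + q)).
Proof.
move=> _ _ _ Hu _ _.
have [q Hq] := x1_sub_y1_dvd Hu.
have Hsol := OmegaOp_solution Hu Hq.
exists q; split => // z; split => [Hz | ->] //.
by apply: OmegaOp_inj; rewrite Hz Hsol.
Qed.
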